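(* Let $G$ be a graph with at least one edge and let $x$ be a non-isolated vertex of $G$. Then there exists a Grundy total dominating sequence of $G$ that contains $x$.
   Context: For a graph $G$, $N(v)$ denotes the open neighborhood of $v$. A sequence $(v_1,\ldots,v_k)$ of distinct vertices is an open neighborhood sequence if $N(v_i)\setminus\bigcup_{j=1}^{i-1}N(v_j)\neq\emptyset$ for each $i\in[k]$. A Grundy total dominating sequence is an open neighborhood sequence of maximum possible length in $G$. *)

From mathcomp Require Import all_boot.
Set Implicit Arguments. Unset Strict Implicit. Unset Printing Implicit Defensive.

Definition simple_graph (T : finType) (e : rel T) : Prop :=
  symmetric e /\ irreflexive e.

Definition nbhd (T : finType) (e : rel T) (v : T) : {set T} := [set u | e v u].

Definition ons (T : finType) (e : rel T) (s : seq T) : Prop :=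
  uniq s /\
  forall i : 'I_(size s),
    nbhd e (tnth (in_tuple s) i)
      :\: \bigcup_(j < size s | j < i) nbhd e (tnth (in_tuple s) j) != set0.

Definition grundy_tds (T : finType) (e : rel T) (s : seq T) : Prop :=
  ons e s /\ forall t : seq T, ons e t -> size t <= size s.

From mathcomp Require Import all_boot.

Set Implicit Arguments.
Unset Strict Implicit.
Unset Printing Implicit Defensive.

(* Take a Grundy total dominating sequence s avoiding x. By maximality x cannot
   be appended to s, so N(x) lies in the union of the neighbourhoods of s.
   Split s = p ++ v :: q at the first vertex v whose neighbourhood completes
   this covering, and replace v by x: x has a neighbour outside N(p), and as
   N(x) is contained in N(p) ∪ N(v), the vertices of q keep their private
   neighbours.  The length is unchanged, so p ++ x :: q is again Grundy. *)

Section OpenNeighborhoodSequences.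
Variables (T : finType) (e : rel T).

Definition nbhd_cover (s : seq T) : {set T} := \bigcup_(v <- s) nbhd e v.

(* [ons_from C s]: s is an open neighbourhood sequence (up to distinctness)
   continuing a prefix whose neighbourhoods cover C. *)
Fixpoint ons_from (C : {set T}) (s : seq T) : bool :=
  if s is v :: s' then ~~ (nbhd e v \subset C) && ons_from (C :|: nbhd e v) s'
  else true.

Definition onsb (s : seq T) : bool := uniq s && ons_from set0 s.

Lemma nbhd_cover_nil : nbhd_cover [::] = set0.
Proof. by rewrite /nbhd_cover big_nil. Qed.

Lemma nbhd_cover_cons v s : nbhd_cover (v :: s) = nbhd e v :|: nbhd_cover s.
Proof. by rewrite /nbhd_cover big_cons. Qed.

Lemma nbhd_cover_rcons s v : nbhd_cover (rcons s v) = nbhd_cover s :|: nbhd e v.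
Proof. by rewrite /nbhd_cover big_rcons. Qed.

Lemma nbhd_cover_nth x0 {s i} :
  i <= size s -> nbhd_cover (take i s) = \bigcup_(j < i) nbhd e (nth x0 s j).
Proof.
move=> le_i_s; rewrite /nbhd_cover (big_nth x0) size_take_min (minn_idPl le_i_s).
by rewrite big_mkord; apply: eq_bigr => j _; rewrite nth_take.
Qed.

Lemma ons_from_nthP x0 C s :
  reflect (forall i, i < size s ->
             ~~ (nbhd e (nth x0 s i) \subset C :|: nbhd_cover (take i s)))
          (ons_from C s).
Proof.
elim: s C => [|v s IHs] C /=; first by apply: ReflectT.
apply: (iffP andP) => [[fresh_v /IHs ons_s] [|i] /= lt_i_s | ons_vs].
- by rewrite nbhd_cover_nil setU0.
- by rewrite nbhd_cover_cons setUA; apply: ons_s.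
- split; first by have := ons_vs 0; rewrite /= nbhd_cover_nil setU0; apply.
  by apply/IHs => i lt_i_s; rewrite -setUA -nbhd_cover_cons; apply: (ons_vs i.+1).
Qed.

Lemma bigcup_nbhd_tnth s (i : 'I_(size s)) :
  \bigcup_(j < size s | j < i) nbhd e (tnth (in_tuple s) j) = nbhd_cover (take i s).
Proof.
set x0 := tnth (in_tuple s) i.
rewrite (nbhd_cover_nth x0 (ltnW (ltn_ord i))).
rewrite (big_ord_widen_cond _ xpredT (fun j => nbhd e (nth x0 s j)) (ltnW (ltn_ord i))).
by apply: eq_bigr => j _; rewrite (tnth_nth x0).
Qed.

Lemma onsP s : reflect (ons e s) (onsb s).
Proof.
case: s => [|x0 s0]; first by apply: ReflectT; split=> // -[].
apply: (iffP andP) => -[uniq_s ons_s]; split=> //.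
- move=> i; rewrite setD_eq0 bigcup_nbhd_tnth (tnth_nth x0).
  by move/(ons_from_nthP x0)/(_ i (ltn_ord i)): ons_s; rewrite set0U.
- apply/(ons_from_nthP x0) => i lt_i_s; rewrite set0U.
  by have := ons_s (Ordinal lt_i_s); rewrite setD_eq0 bigcup_nbhd_tnth (tnth_nth x0).
Qed.

Lemma ons_from_cat C p q :
  ons_from C (p ++ q) = ons_from C p && ons_from (C :|: nbhd_cover p) q.
Proof.
elim: p C => [|v p IHp] C /=; first by rewrite nbhd_cover_nil setU0.
by rewrite IHp nbhd_cover_cons setUA andbA.
Qed.

Lemma ons_from_subset (C D : {set T}) s : C \subset D -> ons_from D s -> ons_from C s.
Proof.
elim: s C D => [|v s IHs] C D //= sCD /andP [fresh_v ons_s]; apply/andP; split.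
- by apply: contra fresh_v => /subset_trans; apply.
- exact: IHs (setSU _ sCD) ons_s.
Qed.

Lemma onsb_size s : onsb s -> size s <= #|T|.
Proof. by case/andP => /card_uniqP <- _; apply: max_card. Qed.

Lemma grundy_tds_exists : exists s, grundy_tds e s.
Proof.
pose has_ons n := [exists t : n.-tuple T, onsb t].
have has_ons0 : exists n, has_ons n by exists 0; apply/existsP; exists [tuple].
have has_ons_bound n : has_ons n -> n <= #|T|.
  by case/existsP => t /onsb_size; rewrite size_tuple.
case: (ex_maxnP has_ons0 has_ons_bound) => m /existsP [t ons_t] max_m.
exists t; split=> [|s /onsP ons_s]; first exact/onsP.
by rewrite size_tuple; apply: max_m; apply/existsP; exists (in_tuple s).
Qed.

Lemma onsb_rcons s x :
  onsb s -> x \notin s -> ~~ (nbhd e x \subset nbhd_cover s) -> onsb (rcons s x).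
Proof.
case/andP=> uniq_s ons_s x_s fresh_x.
by rewrite /onsb rcons_uniq x_s uniq_s -cats1 ons_from_cat ons_s /= set0U fresh_x.
Qed.

Lemma grundy_nbhd_sub_cover s x :
  grundy_tds e s -> x \notin s -> nbhd e x \subset nbhd_cover s.
Proof.
case=> /onsP ons_s max_s x_s; apply: contraT => fresh_x.
by have := max_s _ (elimT (onsP _) (onsb_rcons ons_s x_s fresh_x)); rewrite size_rcons ltnn.
Qed.

Lemma first_covering_split (A : {set T}) s :
  A != set0 -> A \subset nbhd_cover s ->
  exists p v q, [/\ s = p ++ v :: q, ~~ (A \subset nbhd_cover p)
                  & A \subset nbhd_cover p :|: nbhd e v].
Proof.
move=> nzA; elim/last_ind: s => [|s v IHs].
  by rewrite nbhd_cover_nil subset0 (negPf nzA).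
rewrite nbhd_cover_rcons => A_sv.
have [A_s | fresh_A] := boolP (A \subset nbhd_cover s).
- have [p [w [q [-> A_p A_pw]]]] := IHs A_s.
  by exists p, w, (rcons q v); rewrite rcons_cat rcons_cons.
- by exists s, v, [::]; rewrite cats1.
Qed.

Lemma uniq_replace (p q : seq T) (v x : T) :
  uniq (p ++ v :: q) -> x \notin p ++ v :: q -> uniq (p ++ x :: q).
Proof.
have uniq_mid y : uniq (p ++ y :: q) = (y \notin p ++ q) && uniq (p ++ q).
  by rewrite -cat1s uniq_catCA.
rewrite !uniq_mid => /andP [_ ->]; rewrite andbT; apply: contra.
by rewrite !mem_cat inE => /orP [->|->]; rewrite ?orbT.
Qed.

Lemma ons_from_replace (C : {set T}) (p q : seq T) (v x : T) :
  ons_from C (p ++ v :: q) -> ~~ (nbhd e x \subset C :|: nbhd_cover p) ->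
  nbhd e x \subset C :|: nbhd_cover p :|: nbhd e v -> ons_from C (p ++ x :: q).
Proof.
rewrite !ons_from_cat /= => /andP [ons_p /andP [_ ons_q]] fresh_x x_sub.
rewrite ons_p fresh_x; apply: ons_from_subset ons_q.
by rewrite subUset subsetUl x_sub.
Qed.

Lemma onsb_replace (p q : seq T) (v x : T) :
  onsb (p ++ v :: q) -> x \notin p ++ v :: q ->
  ~~ (nbhd e x \subset nbhd_cover p) -> nbhd e x \subset nbhd_cover p :|: nbhd e v ->
  onsb (p ++ x :: q).
Proof.
case/andP=> uniq_s ons_s x_s fresh_x x_sub.
by rewrite /onsb (uniq_replace uniq_s x_s) (ons_from_replace ons_s) ?set0U.
Qed.

End OpenNeighborhoodSequences.

Theorem proposition5p1 (T : finType) (e : rel T) (x : T) :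
  simple_graph e ->
  (exists u v : T, e u v) ->
  (exists y : T, e x y) ->
  exists s : seq T, grundy_tds e s /\ x \in s.
Proof.
move=> _ _ [y xy].
have [s grundy_s] := grundy_tds_exists e.
have [x_s | x_s] := boolP (x \in s); first by exists s.
have nz_x : nbhd e x != set0 by apply/set0Pn; exists y; rewrite inE.
have [p [v [q [def_s fresh_x x_sub]]]] :=
  first_covering_split nz_x (grundy_nbhd_sub_cover grundy_s x_s).
case: grundy_s => /onsP ons_s max_s.
exists (p ++ x :: q); split; last by rewrite mem_cat mem_head orbT.
split=> [|t /max_s]; last by rewrite def_s !size_cat.
by apply/onsP; apply: onsb_replace fresh_x x_sub; rewrite -def_s.
Qed.
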